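(* Let $\alpha : I \to \mathbb{E}^4$ be an arclength parameterized curve (defined on an open interval $I$) with non-zero curvatures $\kappa_1,\kappa_2,\kappa_3$. Suppose two of its curvatures are constant. Then $\alpha$ is congruent to a rectifying curve if and only if one of the following holds: (i) $\kappa_1(s)=\kappa_1$, $\kappa_2(s)=\kappa_2$ are constants and $\kappa_3(s)=\pm \dfrac{1}{\sqrt{-s^2-2cs+c_1}}$ for some $\kappa_1,\kappa_2\in\mathbb{R}$ with $\kappa_1,\kappa_2>0$ and some $c,c_1\in\mathbb{R}$, where $-s^2-2cs+c_1>0$; (ii) $\kappa_2(s)=\kappa_2$, $\kappa_3(s)=\kappa_3$ are constants and $\kappa_1(s)=c_1\dfrac{\sin(\kappa_3 s+c_2)}{s+c}$ for some $\kappa_2>0$, $\kappa_3\in\mathbb{R}\setminus\{0\}$, $c,c_2\in\mathbb{R}$ and $c_1\in\mathbb{R}\setminus\{0\}$; (iii) $\kappa_1(s)=\kappa_1$, $\kappa_3(s)=\kappa_3$ are constants and $\kappa_2(s)=c_2(s+c)\sec(\kappa_3 s+c_1)$ for some $\kappa_1>0$, $\kappa_3\in\mathbb{R}\setminus\{0\}$, $c,c_1\in\mathbb{R}$ and $c_2\in\mathbb{R}\setminus\{0\}$.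
   Context: For an arclength parameterized curve $\alpha$ in $\mathbb{E}^4$ (sufficiently differentiable) one has the Frenet frame $T,N,B_1,B_2$ (orthonormal) with curvatures $\kappa_1,\kappa_2,\kappa_3$ satisfying $T'=\kappa_1 N$, $N'=-\kappa_1 T+\kappa_2 B_1$, $B_1'=-\kappa_2 N+\kappa_3 B_2$, $B_2'=-\kappa_3 B_1$, where $\kappa_1,\kappa_2>0$. ''Non-zero curvatures'' means no curvature is identically zero. A curve $\alpha$ is a rectifying curve if there is a fixed point $p$ such that for all $s$, $\langle \alpha(s)-p, N(s)\rangle = 0$, i.e. the orthogonal complement of $N(s)$ (through $\alpha(s)$) contains $p$. *)

From HB Require Import structures.
From mathcomp Require Import all_boot all_order all_algebra.
From mathcomp Require Import all_classical all_reals all_analysis.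
Set Implicit Arguments. Unset Strict Implicit. Unset Printing Implicit Defensive.
Import Order.TTheory GRing.Theory Num.Theory.
Import numFieldNormedType.Exports.
Local Open Scope classical_set_scope.
Local Open Scope ring_scope.

Definition dot4 {R : realType} (u v : 'rV[R]_4) : R :=
  \sum_(i < 4) u ord0 i * v ord0 i.

Definition open_interval {R : realType} (I : set R) : Prop :=
  [/\ open I, is_interval I & I !=set0].

Definition frenet_frame {R : realType} (I : set R)
    (alpha T N B1 B2 : R -> 'rV[R]_4) (k1 k2 k3 : R -> R) : Prop :=
  forall s, I s ->
    (is_derive s 1 alpha (T s)
     /\ is_derive s 1 T (k1 s *: N s)
     /\ is_derive s 1 N (- k1 s *: T s + k2 s *: B1 s)
     /\ is_derive s 1 B1 (- k2 s *: N s + k3 s *: B2 s)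
     /\ is_derive s 1 B2 (- k3 s *: B1 s))
    /\ (dot4 (T s) (T s) = 1 /\ dot4 (N s) (N s) = 1
        /\ dot4 (B1 s) (B1 s) = 1 /\ dot4 (B2 s) (B2 s) = 1
        /\ dot4 (T s) (N s) = 0 /\ dot4 (T s) (B1 s) = 0
        /\ dot4 (T s) (B2 s) = 0 /\ dot4 (N s) (B1 s) = 0
        /\ dot4 (N s) (B2 s) = 0 /\ dot4 (B1 s) (B2 s) = 0)
    /\ (0 < k1 s /\ 0 < k2 s)
    /\ (derivable k1 s 1 /\ derivable k2 s 1 /\ derivable k3 s 1).

Definition rectifying {R : realType} (I : set R) (beta : R -> 'rV[R]_4) : Prop :=
  exists (T N B1 B2 : R -> 'rV[R]_4) (k1 k2 k3 : R -> R),
    frenet_frame I beta T N B1 B2 k1 k2 k3 /\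
    exists p : 'rV[R]_4, forall s, I s -> dot4 (beta s - p) (N s) = 0.

Definition congruent {R : realType} (I : set R) (alpha beta : R -> 'rV[R]_4) : Prop :=
  exists (Q : 'M[R]_4) (b : 'rV[R]_4),
    Q *m Q^T = 1%:M /\ forall s, I s -> beta s = alpha s *m Q + b.

From HB Require Import structures.
From mathcomp Require Import all_boot all_order all_algebra.
From mathcomp Require Import all_classical all_reals all_analysis.
From mathcomp Require Import ring lra.
Import Order.TTheory GRing.Theory Num.Theory.
Import numFieldNormedType.Exports.
Local Open Scope classical_set_scope.
Local Open Scope ring_scope.

(* Write [alpha s - p] in the Frenet frame [T, N, B1, B2]. Its [N]-coordinate
   vanishes identically exactly when [alpha] is rectifying with centre [p], and
   then differentiating the coordinates shows that the [T]-coordinate is [s + c]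
   and that the [B1]-, [B2]-coordinates [g2], [g3] satisfy
   [(s + c) k1 = k2 g2], [g2' = k3 g3], [g3' = - k3 g2]; conversely such data
   integrate back to a centre. A congruence maps the Frenet frame of [alpha] to
   that of its image, so the question reduces to solving this system.
   If [k1], [k2] are constant, [g2] is affine, [g3 = g2' / k3], and the first
   integral [g2 ^+ 2 + g3 ^+ 2] yields (i). If [k3] is constant, [(g2, g3)]
   rotates with angular speed [k3], so [g2 = C sin (k3 s + phi)] with [C != 0];
   solving the first equation for [k1] or [k2] yields (ii) and (iii). *)

Section Dot4.
Context {R : realType}.
Implicit Types (u v w : 'rV[R]_4) (a : R).

Lemma dot4C u v : dot4 u v = dot4 v u.
Proof. by apply: eq_bigr => i _; rewrite mulrC. Qed.

Lemma dot4Dl u v w : dot4 (u + v) w = dot4 u w + dot4 v w.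
Proof. by rewrite /dot4 -big_split; apply: eq_bigr => i _; rewrite mxE mulrDl. Qed.

Lemma dot4Zl a u w : dot4 (a *: u) w = a * dot4 u w.
Proof. by rewrite /dot4 mulr_sumr; apply: eq_bigr => i _; rewrite mxE mulrA. Qed.

Lemma dot4Dr u v w : dot4 w (u + v) = dot4 w u + dot4 w v.
Proof. by rewrite dot4C dot4Dl !(dot4C w). Qed.

Lemma dot4Zr a u w : dot4 w (a *: u) = a * dot4 w u.
Proof. by rewrite dot4C dot4Zl dot4C. Qed.

Lemma dot4E u v : dot4 u v = (u *m v^T) ord0 ord0.
Proof. by rewrite /dot4 mxE; apply: eq_bigr => i _; rewrite mxE. Qed.

Lemma dot4_mulmx_orthogonal {Q : 'M[R]_4} {u v} :
  Q *m Q^T = 1%:M -> dot4 (u *m Q) (v *m Q) = dot4 u v.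
Proof. by move=> QQT; rewrite !dot4E trmx_mul mulmxA -(mulmxA u) QQT mulmx1. Qed.

End Dot4.

Section MatrixDerivative.
Context {R : realFieldType} {V : normedModType R}.
Implicit Types (x v : V).

Lemma is_derive_mxE {m n} {f : V -> 'M[R]_(m, n)} {x v} {df : 'M[R]_(m, n)} i j :
  is_derive x v f df -> is_derive x v (fun t => f t i j) (df i j).
Proof.
move=> [fx <-]; have /derivable_mxP/(_ i j) fxij := fx.
by rewrite derive_mx // mxE; exact: derivableP.
Qed.

Lemma is_derive_mx {m n} {f : V -> 'M[R]_(m, n)} {x v} {df : 'M[R]_(m, n)} :
  (forall i j, is_derive x v (fun t => f t i j) (df i j)) -> is_derive x v f df.
Proof.
move=> fij; have fx : derivable f x v by apply/derivable_mxP => i j; case: (fij i j).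
apply: DeriveDef => //; rewrite derive_mx //; apply/matrixP => i j.
by rewrite mxE; case: (fij i j).
Qed.

Lemma is_derive_mulmxD {m n p} {f : V -> 'M[R]_(m, n)} {x v} {df : 'M[R]_(m, n)}
    (Q : 'M[R]_(n, p)) (b : 'M[R]_(m, p)) :
  is_derive x v f df -> is_derive x v (fun t => f t *m Q + b) (df *m Q).
Proof.
move=> fx; apply: is_derive_mx => i k.
have -> : (fun t => (f t *m Q + b) i k) =
          \sum_(j < n) (Q j k \*: (fun t => f t i j)) + cst (b i k).
  apply: funext => t; rewrite !mxE fct_sumE; congr (_ + _).
  by apply: eq_bigr => j _; exact: mulrC.
apply: (is_derive_eq (is_deriveD
  (is_derive_sum (fun j => is_deriveZ (Q j k) (is_derive_mxE i j fx)))
  (is_derive_cst (b i k) x v))).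
by rewrite addr0 !mxE; apply: eq_bigr => j _; rewrite mulrC.
Qed.

Lemma is_derive_unique {W : normedModType R} {f : V -> W} {x v d1 d2} :
  is_derive x v f d1 -> is_derive x v f d2 -> d1 = d2.
Proof. by move=> [_ <-] [_ <-]. Qed.

End MatrixDerivative.

Section RealDerivative.
Context {R : realType}.
Implicit Types (f g : R -> R) (k c s : R).

Lemma is_derive_mul {f g df dg s} :
  is_derive s 1 f df -> is_derive s 1 g dg ->
  is_derive s 1 (fun t => f t * g t) (df * g s + f s * dg).
Proof.
move=> fs gs; apply: (is_derive_eq (is_deriveM fs gs)).
by rewrite /GRing.scale /=; ring.
Qed.

Lemma is_derive_affine k c s : is_derive s 1 (fun t => k * t + c) k.
Proof.
apply: (is_derive_eq (is_deriveD (is_deriveZ k (is_derive_id s 1)) (is_derive_cst c s 1))).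
by rewrite addr0 /GRing.scale /= mulr1.
Qed.

Lemma is_derive_addr c s : is_derive s 1 (fun t => t + c) 1.
Proof.
apply: (is_derive_eq (is_deriveD (is_derive_id s 1) (is_derive_cst c s 1))).
by rewrite addr0.
Qed.

Lemma is_derive_sin_affine k c s :
  is_derive s 1 (fun t => sin (k * t + c)) (k * cos (k * s + c)).
Proof.
have := @is_derive1_comp R sin (fun t => k * t + c) s _ _
  (is_derive_sin _) (is_derive_affine k c s).
by rewrite mulrC.
Qed.

Lemma is_derive_cos_affine k c s :
  is_derive s 1 (fun t => cos (k * t + c)) (- (k * sin (k * s + c))).
Proof.
have := @is_derive1_comp R cos (fun t => k * t + c) s _ _
  (is_derive_cos _) (is_derive_affine k c s).
by rewrite mulrC mulrN.
Qed.

Lemma derivable_continuous f s : derivable f s 1 -> {for s, continuous f}.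
Proof. by move=> fs; apply/differentiable_continuous/derivable1_diffP. Qed.

Lemma continuous_eq_dnbhs f g s : {for s, continuous f} -> {for s, continuous g} ->
  (\forall t \near s^', f t = g t) -> f s = g s.
Proof.
move=> /continuous_withinNx fs /continuous_withinNx gs fg.
have fs' : f @ s^' --> g s.
  by apply: cvg_trans gs; apply: near_eq_cvg; apply: filterS fg => t ->.
exact: (cvg_unique (@Rhausdorff R) fs fs').
Qed.

Lemma is_derive_dot4 {f g : R -> 'rV[R]_4} {df dg s} :
  is_derive s 1 f df -> is_derive s 1 g dg ->
  is_derive s 1 (fun t => dot4 (f t) (g t)) (dot4 df (g s) + dot4 (f s) dg).
Proof.
move=> fs gs.
have -> : (fun t => dot4 (f t) (g t)) = \sum_(i < 4) (fun t => f t ord0 i * g t ord0 i).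
  by apply: funext => t; rewrite fct_sumE.
rewrite /dot4 -big_split.
exact: is_derive_sum (fun i =>
  is_derive_mul (is_derive_mxE ord0 i fs) (is_derive_mxE ord0 i gs)).
Qed.

End RealDerivative.

Section OnInterval.
Context {R : realType} {I : set R}.
Hypothesis I_itv : is_interval I.
Implicit Types f : R -> R.

Let itvcc_sub {x y z} : I x -> I y -> z \in `[x, y] -> I z.
Proof. by move=> Ix Iy; rewrite in_itv /=; exact: (I_itv _ _ Ix Iy). Qed.

Lemma is_derive0_cst_on {f x y} : (forall s, I s -> is_derive s 1 f 0) ->
  I x -> I y -> f x = f y.
Proof.
move=> f0.
wlog xy : x y / x <= y.
  move=> le_cst Ix Iy; case: (leP x y) => [xy|/ltW yx]; first exact: le_cst.
  exact/esym/le_cst.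
move=> Ix Iy.
have f0' z : z \in `]x, y[ -> is_derive z 1 f 0.
  rewrite in_itv /= => /andP[xz zy]; apply: f0; apply: (itvcc_sub Ix Iy).
  by rewrite in_itv /= !ltW.
have fc : {within `[x, y], continuous f}.
  by apply: derivable_within_continuous => z /(itvcc_sub Ix Iy)/f0 [].
have [z _] := MVT_segment xy f0' fc.
by move/eqP; rewrite mul0r subr_eq0 => /eqP.
Qed.

Lemma derivable_neq0_sign_on {f x y} :
  (forall s, I s -> derivable f s 1) -> (forall s, I s -> f s != 0) ->
  I x -> I y -> (0 < f x) = (0 < f y).
Proof.
move=> fd fn0.
wlog suff pos : x y / I x -> I y -> 0 < f x -> 0 < f y.
  by move=> Ix Iy; apply/idP/idP; apply: pos.
move=> Ix Iy fx; rewrite lt_neqAle eq_sym fn0 //= leNgt; apply/negP => fy.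
have [a [b [ab Ia Ib sgn]]] : exists a b,
    [/\ a <= b, I a, I b & Num.min (f a) (f b) <= 0 <= Num.max (f a) (f b)].
  have sgn : Num.min (f x) (f y) <= 0 <= Num.max (f x) (f y).
    by rewrite ge_min le_max (ltW fx) (ltW fy) orbT.
  case: (leP x y) => [xy|/ltW yx]; first by exists x, y.
  by exists y, x; rewrite minC maxC.
have fc : {within `[a, b], continuous f}.
  by apply: derivable_within_continuous => z /(itvcc_sub Ia Ib)/fd.
have [z /(itvcc_sub Ia Ib) Iz fz0] := IVT ab fc sgn.
by move: (fn0 z Iz); rewrite fz0 eqxx.
Qed.

End OnInterval.

Section OnOpen.
Context {R : realType} {I : set R}.
Hypothesis I_open : open I.

Lemma near_open {s} : I s -> \forall t \near s, I t.
Proof. by move=> Is; exact: (open_nbhs_nbhs (conj I_open Is)). Qed.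

Lemma is_derive_eq_on {V : normedModType R} {f g : R -> V} {d s} :
  I s -> (forall t, I t -> f t = g t) -> is_derive s 1 f d -> is_derive s 1 g d.
Proof.
move=> Is fg; apply: near_eq_is_derive.
by near=> t; apply: fg; near: t; exact: near_open.
Unshelve. all: by end_near. Qed.

Lemma open_exists_neq c : I !=set0 -> exists s, I s /\ s != c.
Proof.
move=> [s0 Is0]; have [s0c|] := eqVneq s0 c; last by exists s0.
have Is : \forall t \near s0^', I t /\ t != s0.
  near=> t; split; last by near: t; exact: nbhs_dnbhs_neq.
  by near: t; apply: nbhs_dnbhs; exact: near_open.
have [t [It ts0]] := @filter_ex _ _ (Proper_dnbhs_numFieldType s0) _ Is.
by exists t; rewrite -s0c.
Unshelve. all: by end_near. Qed.

End OnOpen.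

Lemma sin_cos_phase {R : realType} (A B : R) :
  exists C phi : R, forall t, A * sin t + B * cos t = C * sin (t + phi).
Proof.
have [->|A0] := eqVneq A 0.
  by exists B, (pi / 2) => t; rewrite sinDpihalf mul0r add0r.
have [/cos_gt0_pihalf cos_gt0 tan_atan] := atan_def (B / A).
have cos_neq0 : cos (atan (B / A)) != 0 by rewrite gt_eqF.
exists (A / cos (atan (B / A))), (atan (B / A)) => t.
have sin_atan : sin (atan (B / A)) = B / A * cos (atan (B / A)).
  by move: tan_atan cos_neq0; set x := atan _; rewrite /tan => <- cx; rewrite divfK.
by rewrite sinD sin_atan; field; apply/andP.
Qed.

Section HarmonicOscillator.
Context {R : realType} {I : set R} {k : R}.
Hypothesis I_itv : is_interval I.

Lemma harmonic_eq0 {u w : R -> R} {s0} : I s0 -> u s0 = 0 -> w s0 = 0 ->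
  (forall s, I s -> is_derive s 1 u (k * w s)) ->
  (forall s, I s -> is_derive s 1 w (- (k * u s))) ->
  forall s, I s -> u s = 0 /\ w s = 0.
Proof.
move=> Is0 u0 w0 du dw s Is.
have dE t : I t -> is_derive t 1 (fun x => u x * u x + w x * w x) 0.
  move=> It; apply: (is_derive_eq (is_deriveD
    (is_derive_mul (du t It) (du t It)) (is_derive_mul (dw t It) (dw t It)))).
  by ring.
have := is_derive0_cst_on I_itv dE Is Is0; rewrite u0 w0 mulr0 addr0 => E0.
by split; nra.
Qed.

Lemma harmonic_sin {g h : R -> R} {s0} : I s0 ->
  (forall s, I s -> is_derive s 1 g (k * h s)) ->
  (forall s, I s -> is_derive s 1 h (- (k * g s))) ->
  exists C phi, forall s, I s -> g s = C * sin (k * s + phi).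
Proof.
move=> Is0 dg dh.
pose A := g s0 * sin (k * s0) + h s0 * cos (k * s0).
pose B := g s0 * cos (k * s0) - h s0 * sin (k * s0).
have [C [phi ABC]] := sin_cos_phase A B.
have ABC' t : A * cos t - B * sin t = C * cos (t + phi).
  by have := ABC (t + pi / 2); rewrite addrAC !sinDpihalf cosDpihalf => <-; ring.
pose u t := g t - C * sin (k * t + phi).
pose w t := h t - C * cos (k * t + phi).
have du t : I t -> is_derive t 1 u (k * w t).
  move=> It; apply: (is_derive_eq (is_deriveB (dg t It)
    (is_deriveZ C (is_derive_sin_affine k phi t)))).
  by rewrite /w /GRing.scale /=; ring.
have dw t : I t -> is_derive t 1 w (- (k * u t)).
  move=> It; apply: (is_derive_eq (is_deriveB (dh t It)
    (is_deriveZ C (is_derive_cos_affine k phi t)))).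
  by rewrite /u /GRing.scale /=; ring.
have pyth := cos2Dsin2 (k * s0).
have u0 : u s0 = 0.
  by rewrite /u -ABC /A /B -[X in X - _]mulr1 -pyth; ring.
have w0 : w s0 = 0.
  by rewrite /w -ABC' /A /B -[X in X - _]mulr1 -pyth; ring.
exists C, phi => s Is; apply: subr0_eq.
by have [] := harmonic_eq0 Is0 u0 w0 du dw s Is.
Qed.

End HarmonicOscillator.

(* The Frenet coordinates of [alpha s - p] are [(s + c, 0, g2 s, g3 s)]. *)
Definition rectifying_system {R : realType} (I : set R) (k1 k2 k3 : R -> R)
    (c : R) (g2 g3 : R -> R) : Prop :=
  forall s, I s -> [/\ (s + c) * k1 s = k2 s * g2 s,
    is_derive s 1 g2 (k3 s * g3 s) & is_derive s 1 g3 (- (k3 s * g2 s))].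

Section RectifyingSystem.
Context {R : realType} {I : set R} {alpha T N B1 B2 : R -> 'rV[R]_4} {k1 k2 k3 : R -> R}.
Hypothesis I_oitv : open_interval I.
Hypothesis frame : frenet_frame I alpha T N B1 B2 k1 k2 k3.

Lemma center_rectifying_system {p} :
  (forall s, I s -> dot4 (alpha s - p) (N s) = 0) ->
  exists c g2 g3, rectifying_system I k1 k2 k3 c g2 g3.
Proof.
move=> xN0; have [I_open I_itv [s0 Is0]] := I_oitv.
pose x t := alpha t - p.
have dx s : I s -> is_derive s 1 x (T s).
  move=> Is; have [[da _] _] := frame s Is.
  by apply: (is_derive_eq (is_deriveB da (is_derive_cst p s 1))); rewrite subr0.
have dxT s : I s -> is_derive s 1 (fun t => dot4 (x t) (T t) - t) 0.
  move=> Is; have [[_ [dT _]] [[TT _] _]] := frame s Is.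
  apply: (is_derive_eq (is_deriveB (is_derive_dot4 (dx s Is) dT) (is_derive_id s 1))).
  by rewrite dot4Zr TT xN0 // mulr0 addr0 subrr.
pose c := dot4 (x s0) (T s0) - s0.
exists c, (fun t => dot4 (x t) (B1 t)), (fun t => dot4 (x t) (B2 t)) => s Is.
have [[_ [_ [dN [dB1 dB2]]]] [[_ [_ [_ [_ [TN [TB1 [TB2 _]]]]]]] _]] := frame s Is.
have xT : dot4 (x s) (T s) = s + c.
  by have := is_derive0_cst_on I_itv dxT Is Is0; rewrite /c => <-; ring.
have dxN : is_derive s 1 (fun t => dot4 (x t) (N t))
    (k2 s * dot4 (x s) (B1 s) - (s + c) * k1 s).
  apply: (is_derive_eq (is_derive_dot4 (dx s Is) dN)).
  by rewrite dot4Dr !dot4Zr TN xT; ring.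
split.
- have dxN0 : is_derive s 1 (fun t => dot4 (x t) (N t)) 0.
    by apply: (is_derive_eq_on I_open Is _ (is_derive_cst 0 s 1)) => t It; rewrite xN0.
  by move/eqP: (is_derive_unique dxN dxN0); rewrite subr_eq0 => /eqP.
- apply: (is_derive_eq (is_derive_dot4 (dx s Is) dB1)).
  by rewrite dot4Dr !dot4Zr TB1 xN0 //; ring.
- apply: (is_derive_eq (is_derive_dot4 (dx s Is) dB2)).
  by rewrite !dot4Zr TB2; ring.
Qed.

Lemma rectifying_system_center {c g2 g3} : rectifying_system I k1 k2 k3 c g2 g3 ->
  exists p, forall s, I s -> dot4 (alpha s - p) (N s) = 0.
Proof.
move=> S; have [_ I_itv [s0 Is0]] := I_oitv.
pose P t := alpha t - ((t + c) *: T t + g2 t *: B1 t + g3 t *: B2 t).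
have dP i s : I s -> is_derive s 1 (fun t => P t ord0 i) 0.
  move=> Is; have [[da [dT [dN [dB1 dB2]]]] _] := frame s Is.
  have [e dg2 dg3] := S s Is.
  have -> : (fun t => P t ord0 i) = fun t => alpha t ord0 i -
      ((t + c) * T t ord0 i + g2 t * B1 t ord0 i + g3 t * B2 t ord0 i).
    by apply: funext => t; rewrite !mxE.
  move: (is_derive_mxE ord0 i da) (is_derive_mxE ord0 i dT)
    (is_derive_mxE ord0 i dB1) (is_derive_mxE ord0 i dB2) => dai dTi dB1i dB2i.
  apply: (is_derive_eq (is_deriveB dai (is_deriveD (is_deriveD
    (is_derive_mul (is_derive_addr c s) dTi) (is_derive_mul dg2 dB1i))
    (is_derive_mul dg3 dB2i)))).
  rewrite !mxE; transitivity ((k2 s * g2 s - (s + c) * k1 s) * N s ord0 i).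
    by rewrite /GRing.scale /=; ring.
  by rewrite e subrr mul0r.
exists (P s0) => s Is.
have -> : alpha s - P s0 = (s + c) *: T s + g2 s *: B1 s + g3 s *: B2 s.
  apply/rowP => i; have := is_derive0_cst_on I_itv (dP i) Is Is0.
  by rewrite !mxE; lra.
have [_ [[_ [_ [_ [_ [TN [_ [_ [NB1 [NB2 _]]]]]]]]] _]] := frame s Is.
by rewrite !dot4Dl !dot4Zl TN (dot4C (B1 s)) NB1 (dot4C (B2 s)) NB2; ring.
Qed.

Lemma congruent_rectifying_center {beta} : congruent I alpha beta -> rectifying I beta ->
  exists p, forall s, I s -> dot4 (alpha s - p) (N s) = 0.
Proof.
move=> [Q [b [QQT ab]]] [T' [N' [B1' [B2' [k1' [k2' [k3' [frame' [p bp]]]]]]]]].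
have [I_open _ _] := I_oitv.
have T'E s : I s -> T' s = T s *m Q.
  move=> Is; have [[da _] _] := frame s Is; have [[db _] _] := frame' s Is.
  apply: is_derive_unique db _.
  by apply: (is_derive_eq_on I_open Is _ (is_derive_mulmxD Q b da)) => t It; rewrite ab.
have N'E s : I s -> N' s = N s *m Q.
  move=> Is; have [[_ [dT _]] [[_ [NN _]] [[k1_gt0 _] _]]] := frame s Is.
  have [[_ [dT' _]] [[_ [NN' _]] [[k1'_gt0 _] _]]] := frame' s Is.
  have k1N : k1' s *: N' s = k1 s *: (N s *m Q).
    rewrite scalemxAl; apply: is_derive_unique dT' _.
    apply: (is_derive_eq_on I_open Is _ (is_derive_mulmxD Q 0 dT)) => t It.
    by rewrite T'E ?addr0.
  have k1E : k1' s = k1 s.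
    have := congr1 (fun v => dot4 v v) k1N.
    by rewrite /= !dot4Zl !dot4Zr NN' dot4_mulmx_orthogonal // NN !mulr1; nra.
  by apply: (scalerI (lt0r_neq0 k1_gt0)); rewrite -[in LHS]k1E.
exists ((p - b) *m Q^T) => s Is.
rewrite -(dot4_mulmx_orthogonal QQT) -(bp s Is) ab // N'E //; congr dot4.
by rewrite mulmxBl -mulmxA (mulmx1C QQT) mulmx1 opprB addrA.
Qed.

Lemma congruent_rectifyingE :
  (exists beta, congruent I alpha beta /\ rectifying I beta) <->
  exists c g2 g3, rectifying_system I k1 k2 k3 c g2 g3.
Proof.
split=> [[beta [ab rb]]|[c [g2 [g3 S]]]].
  have [p xN0] := congruent_rectifying_center ab rb.
  exact: center_rectifying_system xN0.
have [p xN0] := rectifying_system_center S.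
exists alpha; split.
  by exists 1%:M, 0; rewrite trmx1 mulmx1; split=> // s _; rewrite mulmx1 addr0.
by exists T, N, B1, B2, k1, k2, k3; split=> //; exists p.
Qed.

End RectifyingSystem.

Lemma sin_neq0 {R : realType} (u : R) : u != 0 -> `|u| < pi -> sin u != 0.
Proof.
move=> u0 upi; have [u_gt0|u_le0] := ltP 0 u.
  by rewrite gt_eqF // sin_gt0_pi // u_gt0 -(gtr0_norm u_gt0).
have u_lt0 : u < 0 by rewrite lt_neqAle u0.
have : 0 < sin (- u) by rewrite sin_gt0_pi // oppr_gt0 u_lt0 -(ltr0_norm u_lt0).
by rewrite sinN oppr_gt0 => /lt_eqF ->.
Qed.

Lemma cos_affine_dnbhs_neq0 {R : realType} (k c s : R) :
  k != 0 -> cos (k * s + c) = 0 ->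
  \forall t \near s^', cos (k * t + c) != 0.
Proof.
move=> k0 cos0.
have sin_neq0' : sin (k * s + c) != 0.
  apply: contra_eq_neq (cos2Dsin2 (k * s + c)) => ->.
  by rewrite cos0 expr0n addr0 eq_sym oner_neq0.
have near_s : \forall t \near s, `|s - t| < pi / `|k|.
  have eps_gt0 : 0 < pi / `|k| by rewrite divr_gt0 ?pi_gt0 ?normr_gt0.
  by apply: filterS (@near_ball _ _ s _ eps_gt0) => t; rewrite -ball_normE.
near=> t.
have -> : k * t + c = (k * s + c) + k * (t - s) by ring.
rewrite cosD cos0 mul0r sub0r oppr_eq0 mulf_neq0 // sin_neq0 //.
  by rewrite mulf_neq0 // subr_eq0; near: t; exact: nbhs_dnbhs_neq.
rewrite normrM distrC -ltr_pdivlMl ?normr_gt0 // mulrC.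
by near: t; apply: nbhs_dnbhs; exact: near_s.
Unshelve. all: by end_near. Qed.

Definition curvatures_i {R : realType} (I : set R) (k1 k2 k3 : R -> R) : Prop :=
  exists (a b c c1 e : R), 0 < a /\ 0 < b /\ (e = 1 \/ e = -1) /\
    forall s, I s ->
      [/\ k1 s = a, k2 s = b, 0 < - s ^+ 2 - 2 * c * s + c1
        & k3 s = e / Num.sqrt (- s ^+ 2 - 2 * c * s + c1)].

Definition curvatures_ii {R : realType} (I : set R) (k1 k2 k3 : R -> R) : Prop :=
  exists (b k c c1 c2 : R), 0 < b /\ k != 0 /\ c1 != 0 /\
    forall s, I s ->
      [/\ k2 s = b, k3 s = k
        & s + c != 0 -> k1 s = c1 * sin (k * s + c2) / (s + c)].

Definition curvatures_iii {R : realType} (I : set R) (k1 k2 k3 : R -> R) : Prop :=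
  exists (a k c c1 c2 : R), 0 < a /\ k != 0 /\ c2 != 0 /\
    forall s, I s ->
      [/\ k1 s = a, k3 s = k
        & cos (k * s + c1) != 0 -> k2 s = c2 * (s + c) / cos (k * s + c1)].

Section Curvatures.
Context {R : realType} {I : set R} {alpha T N B1 B2 : R -> 'rV[R]_4} {k1 k2 k3 : R -> R}.
Hypothesis I_oitv : open_interval I.
Hypothesis frame : frenet_frame I alpha T N B1 B2 k1 k2 k3.

Lemma rectifying_system_k1k2_cst {a b c g2 g3} :
  (forall s, I s -> k1 s = a /\ k2 s = b) -> rectifying_system I k1 k2 k3 c g2 g3 ->
  exists m c1, 0 < m /\ forall s, I s ->
    k3 s * g3 s = m /\ - s ^+ 2 - 2 * c * s + c1 = (g3 s / m) ^+ 2.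
Proof.
move=> k12 S; have [I_open I_itv [s0 Is0]] := I_oitv.
have [a_gt0 b_gt0] : 0 < a /\ 0 < b.
  by have [_ [_ [[? ?] _]]] := frame s0 Is0; have [<- <-] := k12 s0 Is0.
pose m := a / b; have m_gt0 : 0 < m by rewrite divr_gt0.
have g2E s : I s -> g2 s = m * s + m * c.
  move=> Is; have [e _ _] := S s Is; have [k1a k2b] := k12 s Is.
  apply: (mulfI (lt0r_neq0 b_gt0)); rewrite -k2b -e k1a k2b /m.
  by field; rewrite lt0r_neq0.
have k3g3 s : I s -> k3 s * g3 s = m.
  move=> Is; have [_ dg2 _] := S s Is; apply: is_derive_unique dg2 _.
  apply: (is_derive_eq_on I_open Is _ (is_derive_affine m (m * c) s)) => t It.
  by rewrite g2E.
pose E t := g3 t * g3 t + (m * t + m * c) * (m * t + m * c).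
have dE s : I s -> is_derive s 1 E 0.
  move=> Is; have [_ _ dg3] := S s Is; have dg2 := is_derive_affine m (m * c) s.
  apply: (is_derive_eq (is_deriveD (is_derive_mul dg3 dg3) (is_derive_mul dg2 dg2))).
  transitivity (2 * (m * (m * s + m * c) - k3 s * g3 s * g2 s)); first by ring.
  by rewrite k3g3 // g2E // subrr mulr0.
exists m, (E s0 / (m * m) - c * c); split=> // s Is; split; first exact: k3g3.
rewrite -(is_derive0_cst_on I_itv dE Is Is0) /E.
by field; rewrite lt0r_neq0.
Qed.

Lemma curvatures_i_of_system {a b c g2 g3} :
  (forall s, I s -> k1 s = a /\ k2 s = b) -> rectifying_system I k1 k2 k3 c g2 g3 ->
  curvatures_i I k1 k2 k3.
Proof.
move=> k12 S; have [_ I_itv [s0 Is0]] := I_oitv.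
have [m [c1 [m_gt0 mc1]]] := rectifying_system_k1k2_cst k12 S.
have g3_neq0 s : I s -> g3 s != 0.
  move=> Is; apply: contraTneq m_gt0 => g30.
  by have [<- _] := mc1 s Is; rewrite g30 mulr0 ltxx.
have g3_sign s : I s -> (0 < g3 s) = (0 < g3 s0).
  move=> Is; apply: (derivable_neq0_sign_on I_itv _ g3_neq0 Is Is0) => t It.
  by have [_ _ [? _]] := S t It.
have [_ [_ [[a_gt0 b_gt0] _]]] := frame s0 Is0; have [k1a k2b] := k12 s0 Is0.
exists a, b, c, c1, (if 0 < g3 s0 then 1 else -1).
split; first by rewrite -k1a.
split; first by rewrite -k2b.
split; first by case: ifP; [left|right].
move=> s Is; have [k3g3 quad] := mc1 s Is; have [k1s k2s] := k12 s Is.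
have quad_gt0 : 0 < - s ^+ 2 - 2 * c * s + c1.
  by rewrite quad exprn_even_gt0 // mulf_neq0 ?invr_eq0 ?g3_neq0 ?lt0r_neq0.
split=> //.
have -> : k3 s = m / g3 s by rewrite -k3g3 mulfK ?g3_neq0.
rewrite quad sqrtr_sqr -(g3_sign s Is); case: ifP => g3_gt0.
  by rewrite gtr0_norm ?divr_gt0 //; field; rewrite g3_neq0 // lt0r_neq0.
have g3_lt0 : g3 s < 0 by rewrite lt_neqAle g3_neq0 // leNgt g3_gt0.
rewrite ltr0_norm ?pmulr_llt0 ?invr_gt0 //.
by field; rewrite g3_neq0 // lt0r_neq0.
Qed.

Lemma rectifying_system_k3_cst {k c g2 g3} :
  (forall s, I s -> k3 s = k) -> rectifying_system I k1 k2 k3 c g2 g3 ->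
  exists C phi, C != 0 /\ forall s, I s -> g2 s = C * sin (k * s + phi).
Proof.
move=> k3k S; have [I_open I_itv [s0 Is0]] := I_oitv.
have dg2 s : I s -> is_derive s 1 g2 (k * g3 s).
  by move=> Is; have [_ ? _] := S s Is; rewrite -(k3k s Is).
have dg3 s : I s -> is_derive s 1 g3 (- (k * g2 s)).
  by move=> Is; have [_ _ ?] := S s Is; rewrite -(k3k s Is).
have [C [phi g2E]] := harmonic_sin I_itv Is0 dg2 dg3.
exists C, phi; split=> //; apply/eqP => C0.
have [s1 [Is1 s1c]] := open_exists_neq I_open (- c) (ex_intro _ s0 Is0).
have [e _ _] := S s1 Is1; have [_ [_ [[k1_gt0 _] _]]] := frame s1 Is1.
move/eqP: e; rewrite g2E // C0 mul0r mulr0 mulf_eq0 (gt_eqF k1_gt0) orbF addr_eq0.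
by rewrite (negbTE s1c).
Qed.

Lemma curvatures_ii_of_system {b k c g2 g3} :
  (forall s, I s -> k2 s = b /\ k3 s = k) -> k != 0 ->
  rectifying_system I k1 k2 k3 c g2 g3 -> curvatures_ii I k1 k2 k3.
Proof.
move=> k23 k0 S; have [_ _ [s0 Is0]] := I_oitv.
have [C [phi [C0 g2E]]] := rectifying_system_k3_cst (fun s Is => proj2 (k23 s Is)) S.
have [_ [_ [[_ b_gt0] _]]] := frame s0 Is0; rewrite (proj1 (k23 s0 Is0)) in b_gt0.
exists b, k, c, (b * C), phi; split=> //; split=> //.
split; first exact: mulf_neq0 (lt0r_neq0 b_gt0) C0.
move=> s Is; have [k2b k3k] := k23 s Is; split=> // sc0.
have [e _ _] := S s Is; rewrite k2b g2E // in e.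
by apply: (mulfI sc0); rewrite e; field.
Qed.

Lemma curvatures_iii_of_system {a k c g2 g3} :
  (forall s, I s -> k1 s = a /\ k3 s = k) -> k != 0 ->
  rectifying_system I k1 k2 k3 c g2 g3 -> curvatures_iii I k1 k2 k3.
Proof.
move=> k13 k0 S; have [_ _ [s0 Is0]] := I_oitv.
have [C [phi [C0 g2E]]] := rectifying_system_k3_cst (fun s Is => proj2 (k13 s Is)) S.
have [_ [_ [[a_gt0 _] _]]] := frame s0 Is0; rewrite (proj1 (k13 s0 Is0)) in a_gt0.
exists a, k, c, (phi - pi / 2), (a / C); split=> //; split=> //.
split; first by rewrite mulf_neq0 ?invr_eq0 // lt0r_neq0.
move=> s Is; have [k1a k3k] := k13 s Is; split=> //.
rewrite addrA cosBpihalf => sin0.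
have [e _ _] := S s Is; rewrite k1a g2E // in e.
apply: (mulfI (mulf_neq0 C0 sin0)); rewrite mulrC -e.
by field; rewrite C0 sin0.
Qed.

Lemma system_of_curvatures_i :
  curvatures_i I k1 k2 k3 -> exists c g2 g3, rectifying_system I k1 k2 k3 c g2 g3.
Proof.
move=> [a [b [c [c1 [e [a_gt0 [b_gt0 [e2 ks]]]]]]]].
pose m := a / b; pose q t := - t ^+ 2 - 2 * c * t + c1.
exists c, (fun t => m * t + m * c), (fun t => m * e * Num.sqrt (q t)) => s Is.
have [k1a k2b q_gt0 k3E] := ks s Is.
have sq_neq0 : Num.sqrt (q s) != 0 by rewrite lt0r_neq0 ?sqrtr_gt0.
have ee : e * e = 1 by case: e2 => ->; rewrite ?mulrNN mulr1.
split.
- by rewrite k1a k2b /m; field; rewrite lt0r_neq0.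
- apply: (is_derive_eq (is_derive_affine m (m * c) s)).
  rewrite k3E -/(q s); transitivity (m * (e * e)); first by rewrite ee mulr1.
  by field.
- have dq : is_derive s 1 q (- 2 * s - 2 * c).
    apply: (is_derive_eq (is_deriveD (is_deriveB (is_deriveN (is_derive_mul
      (is_derive_id s 1) (is_derive_id s 1))) (is_deriveZ (2 * c) (is_derive_id s 1)))
      (is_derive_cst c1 s 1))).
    by rewrite /GRing.scale /=; ring.
  have dsq := @is_derive1_comp R Num.sqrt q s _ _ (is_derive1_sqrt q_gt0) dq.
  apply: (is_derive_eq (is_deriveZ (m * e) dsq)).
  by rewrite k3E -/(q s) /GRing.scale /=; field.
Qed.

Lemma system_of_curvatures_ii :
  curvatures_ii I k1 k2 k3 -> exists c g2 g3, rectifying_system I k1 k2 k3 c g2 g3.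
Proof.
move=> [b [k [c [c1 [c2 [b_gt0 [_ [_ ks]]]]]]]]; have [I_open _ _] := I_oitv.
(* Off the zero of [s + c] this is the hypothesis; at the zero, continuity. *)
have k1E s : I s -> (s + c) * k1 s = c1 * sin (k * s + c2).
  move=> Is; have [sc0|sc] := eqVneq (s + c) 0; last first.
    by have [_ _ /(_ sc) ->] := ks s Is; field.
  have [_ [_ [_ [dk1 _]]]] := frame s Is.
  apply: (continuous_eq_dnbhs (fun t => (t + c) * k1 t) (fun t => c1 * sin (k * t + c2))).
  - apply: derivable_continuous.
    by case: (is_derive_mul (is_derive_addr c s) (derivableP dk1)).
  - apply: derivable_continuous.
    by case: (is_deriveZ c1 (is_derive_sin_affine k c2 s)).
  near=> t.
  have tc : t + c != 0.
    have -> : c = - s by apply/eqP; rewrite -addr_eq0 addrC sc0.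
    by rewrite subr_eq0; near: t; exact: nbhs_dnbhs_neq.
  have It : I t by near: t; apply: nbhs_dnbhs; exact (near_open I_open Is).
  by have [_ _ /(_ tc) ->] := ks t It; field.
exists c, (fun t => c1 / b * sin (k * t + c2)), (fun t => c1 / b * cos (k * t + c2)).
move=> s Is; have [k2b k3k _] := ks s Is; split.
- by rewrite k1E // k2b; field; rewrite lt0r_neq0.
- apply: (is_derive_eq (is_deriveZ (c1 / b) (is_derive_sin_affine k c2 s))).
  by rewrite k3k /GRing.scale /=; ring.
- apply: (is_derive_eq (is_deriveZ (c1 / b) (is_derive_cos_affine k c2 s))).
  by rewrite k3k /GRing.scale /=; ring.
Unshelve. all: by end_near. Qed.

Lemma system_of_curvatures_iii :
  curvatures_iii I k1 k2 k3 -> exists c g2 g3, rectifying_system I k1 k2 k3 c g2 g3.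
Proof.
move=> [a [k [c [c1 [c2 [a_gt0 [k0 [c20 ks]]]]]]]]; have [I_open _ _] := I_oitv.
have k2E s : I s -> k2 s * cos (k * s + c1) = c2 * (s + c).
  move=> Is; have [cos0|cos_neq0] := eqVneq (cos (k * s + c1)) 0; last first.
    by have [_ _ /(_ cos_neq0) ->] := ks s Is; field.
  have [_ [_ [_ [_ [dk2 _]]]]] := frame s Is.
  apply: (continuous_eq_dnbhs (fun t => k2 t * cos (k * t + c1)) (fun t => c2 * (t + c))).
  - apply: derivable_continuous.
    by case: (is_derive_mul (derivableP dk2) (is_derive_cos_affine k c1 s)).
  - by apply: derivable_continuous; case: (is_deriveZ c2 (is_derive_addr c s)).
  near=> t.
  have It : I t by near: t; apply: nbhs_dnbhs; exact (near_open I_open Is).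
  have cos_neq0 : cos (k * t + c1) != 0.
    by near: t; exact: cos_affine_dnbhs_neq0.
  by have [_ _ /(_ cos_neq0) ->] := ks t It; field.
exists c, (fun t => a / c2 * cos (k * t + c1)), (fun t => - (a / c2) * sin (k * t + c1)).
move=> s Is; have [k1a k3k _] := ks s Is; split.
- by rewrite k1a mulrCA k2E //; field.
- apply: (is_derive_eq (is_deriveZ (a / c2) (is_derive_cos_affine k c1 s))).
  by rewrite k3k /GRing.scale /=; ring.
- apply: (is_derive_eq (is_deriveZ (- (a / c2)) (is_derive_sin_affine k c1 s))).
  by rewrite k3k /GRing.scale /=; ring.
Unshelve. all: by end_near. Qed.

End Curvatures.

Theorem theorem3p3 (R : realType) (I : set R)
    (alpha T N B1 B2 : R -> 'rV[R]_4) (k1 k2 k3 : R -> R) :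
  open_interval I ->
  frenet_frame I alpha T N B1 B2 k1 k2 k3 ->
  (* non-zero curvatures (k1, k2 > 0 are part of the frame) *)
  (exists s0, I s0 /\ k3 s0 != 0) ->
  (* two of the curvatures are constant *)
  ((exists a b : R, forall s, I s -> k1 s = a /\ k2 s = b) \/
   (exists a b : R, forall s, I s -> k2 s = a /\ k3 s = b) \/
   (exists a b : R, forall s, I s -> k1 s = a /\ k3 s = b)) ->
  ((exists beta, congruent I alpha beta /\ rectifying I beta) <->
   (* (i) *)
   (exists (a b c c1 e : R), 0 < a /\ 0 < b /\ (e = 1 \/ e = -1) /\
      forall s, I s ->
        [/\ k1 s = a, k2 s = b, 0 < - s ^+ 2 - 2 * c * s + c1
          & k3 s = e / Num.sqrt (- s ^+ 2 - 2 * c * s + c1)])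
   \/
   (* (ii) *)
   (exists (b k c c1 c2 : R), 0 < b /\ k != 0 /\ c1 != 0 /\
      forall s, I s ->
        [/\ k2 s = b, k3 s = k
          & s + c != 0 -> k1 s = c1 * sin (k * s + c2) / (s + c)])
   \/
   (* (iii) *)
   (exists (a k c c1 c2 : R), 0 < a /\ k != 0 /\ c2 != 0 /\
      forall s, I s ->
        [/\ k1 s = a, k3 s = k
          & cos (k * s + c1) != 0 -> k2 s = c2 * (s + c) / cos (k * s + c1)])).
Proof.
move=> I_oitv frame [s0 [Is0 k3s0]] two_cst.
rewrite (congruent_rectifyingE I_oitv frame).
split=> [[c [g2 [g3 S]]]|].
- case: two_cst => [[a [b k12]]|[[b [k k23]]|[a [k k13]]]].
  + left; exact (curvatures_i_of_system I_oitv frame k12 S).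
  + right; left; refine (curvatures_ii_of_system I_oitv frame k23 _ S).
    by have [_ <-] := k23 s0 Is0.
  + right; right; refine (curvatures_iii_of_system I_oitv frame k13 _ S).
    by have [_ <-] := k13 s0 Is0.
- case=> [|[]].
  + exact: system_of_curvatures_i.
  + exact: system_of_curvatures_ii I_oitv frame.
  + exact: system_of_curvatures_iii I_oitv frame.
Qed.
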